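(* Let $P$ be a simplicial polytope of dimension $d\ge3$. Then $\dim\mathrm{InCone}(P)\le1$.
   Context: $\mathrm{InCone}(P)$ is the set of polytopes with all vertices on a common sphere and with the same normal fan as $P$, modulo translation; it is a polyhedral cone (identified with the set of such polytopes whose inscribing sphere is centered at the origin). *)

From HB Require Import structures.
From mathcomp Require Import all_boot all_order all_algebra.
From mathcomp Require Import boolp classical_sets reals.
Set Implicit Arguments. Unset Strict Implicit. Unset Printing Implicit Defensive.
Import Order.TTheory GRing.Theory Num.Theory.
Local Open Scope ring_scope.
Local Open Scope classical_set_scope.

Section Polytopes.
Variables (R : realType) (d : nat).
Local Notation vec := 'rV[R]_d.

Definition dotv (u x : vec) : R := \sum_(i < d) u 0 i * x 0 i.

Definition conv (V : seq vec) : set vec :=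
  [set x | exists l : 'I_(size V) -> R,
     (forall i, 0 <= l i) /\ \sum_i l i = 1 /\ x = \sum_i l i *: V`_i].

Definition is_polytope (P : set vec) : Prop := exists V : seq vec, P = conv V.

Definition span_dim_eq (S : set vec) (k : nat) : Prop :=
  (exists M : 'M[R]_(k, d), (forall i, S (row i M)) /\ \rank M = k) /\
  (exists M : 'M[R]_(k, d), forall x, S x -> (x <= M)%MS).

Definition aff_dim_eq (S : set vec) (k : nat) : Prop :=
  exists x0, S x0 /\ span_dim_eq [set x - x0 | x in S] k.

Definition face_dir (P : set vec) (c : vec) : set vec :=
  [set x | P x /\ forall y, P y -> dotv c y <= dotv c x].

Definition is_face (P F : set vec) : Prop :=
  exists c, F = face_dir P c /\ F !=set0.

Definition is_vertex (P : set vec) (v : vec) : Prop :=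
  exists c, face_dir P c = [set v].

Definition is_facet (P F : set vec) : Prop :=
  is_face P F /\ aff_dim_eq F d.-1.

Definition simplicial (P : set vec) : Prop :=
  forall F, is_facet P F ->
    exists s : seq vec, uniq s /\ size s = d /\
      forall v, (v \in s) <-> (is_vertex P v /\ F v).

Definition normal_cone (P F : set vec) : set vec :=
  [set c | forall x y, F x -> P y -> dotv c y <= dotv c x].

Definition normal_fan (P : set vec) : set (set vec) :=
  [set N | exists F, is_face P F /\ N = normal_cone P F].

Definition inscribed_origin (Q : set vec) : Prop :=
  exists r : R, forall v, is_vertex Q v -> dotv v v = r.

(* InCone(P), identified with the inscribed polytopes with the same
   normal fan as P whose circumsphere is centered at the origin *)
Definition InCone (P : set vec) : set (set vec) :=
  [set Q | is_polytope Q /\ normal_fan Q = normal_fan P /\ inscribed_origin Q].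

Definition support (Q : set vec) (u : vec) : R := sup [set dotv u x | x in Q].

Definition fspan_dim_le (S : set (vec -> R)) (k : nat) : Prop :=
  exists w : 'I_k -> vec -> R, forall f, S f ->
    exists a : 'I_k -> R, f = (fun u => \sum_i a i * w i u).

(* dim InCone(P) <= k : polytopes embedded linearly (for Minkowski sum and
   dilation) via their support functions *)
Definition InCone_dim_le (P : set vec) (k : nat) : Prop :=
  fspan_dim_le [set support Q | Q in InCone P] k.

End Polytopes.

From Pilot Require Import Defs.
From mathcomp Require Import all_boot all_order all_algebra.
From mathcomp Require Import boolp classical_sets reals.
From mathcomp Require Import lra zify.
Set Implicit Arguments. Unset Strict Implicit. Unset Printing Implicit Defensive.
Import Order.TTheory GRing.Theory Num.Theory.
Local Open Scope ring_scope.
Local Open Scope classical_set_scope.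

(* Let P = conv V be full-dimensional and simplicial, d >= 3, and let Q0, Q be
   inscribed (in spheres centred at 0, of squared radii r0, r) with the normal
   fan of P.  Equal normal fans give a bijection phi between the vertices of P
   and of Q, and every edge [p, q] of P is mapped to a positively parallel edge,
   phi q - phi p = mu (q - p).  Inside a facet, a (d-1)-simplex, any two edges
   span a triangle, so all the mu agree and phi is a homothety there; comparing
   with phi0 (for Q0) gives phi = k phi0 + t on the facet.  Since both images
   are inscribed, t is orthogonal to the facet.  On an adjacent facet sharing
   an edge with it the same decomposition holds with the same k and t (both are
   determined by the two endpoints of the edge), and that facet leaves the
   hyperplane of the first one, so t = 0.  Finally r = k^2 r0 fixes k > 0
   independently of the facet, so phi = k phi0 on all vertices and h_Q = k h_Q0:
   every support function of InCone(P) is a multiple of h_Q0. *)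

Lemma scalerIr (K : fieldType) (U : lmodType K) (v : U) a b :
  v != 0 -> a *: v = b *: v -> a = b.
Proof.
move=> v0 /eqP; rewrite -subr_eq0 -scalerBl scaler_eq0 (negbTE v0) orbF subr_eq0.
by move/eqP.
Qed.

Section InnerProduct.
Variables (R : realType) (d : nat).
Local Notation vec := 'rV[R]_d.
Local Notation dot := (@dotv R d).

Lemma dotvC (u x : vec) : dot u x = dot x u.
Proof. by rewrite /dotv; apply: eq_bigr => i _; rewrite mulrC. Qed.
Lemma dotvDl (u v x : vec) : dot (u + v) x = dot u x + dot v x.
Proof. by rewrite /dotv -big_split; apply: eq_bigr => i _; rewrite !mxE mulrDl. Qed.
Lemma dotvDr (u v x : vec) : dot x (u + v) = dot x u + dot x v.
Proof. by rewrite dotvC dotvDl !(dotvC x). Qed.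
Lemma dotvZl a (u x : vec) : dot (a *: u) x = a * dot u x.
Proof. by rewrite /dotv mulr_sumr; apply: eq_bigr => i _; rewrite !mxE mulrA. Qed.
Lemma dotvZr a (u x : vec) : dot x (a *: u) = a * dot x u.
Proof. by rewrite dotvC dotvZl dotvC. Qed.
Lemma dotvNl (u x : vec) : dot (- u) x = - dot u x.
Proof. by rewrite -scaleN1r dotvZl mulN1r. Qed.
Lemma dotvNr (u x : vec) : dot x (- u) = - dot x u.
Proof. by rewrite dotvC dotvNl dotvC. Qed.
Lemma dotvBl (u v x : vec) : dot (u - v) x = dot u x - dot v x.
Proof. by rewrite dotvDl dotvNl. Qed.
Lemma dotvBr (u v x : vec) : dot x (u - v) = dot x u - dot x v.
Proof. by rewrite dotvDr dotvNr. Qed.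
Lemma dotv0l (x : vec) : dot 0 x = 0.
Proof. by rewrite /dotv big1 // => i _; rewrite mxE mul0r. Qed.
Lemma dotv0r (x : vec) : dot x 0 = 0.
Proof. by rewrite dotvC dotv0l. Qed.
Lemma dotv_sumr (I : finType) (F : I -> vec) (x : vec) :
  dot x (\sum_i F i) = \sum_i dot x (F i).
Proof.
elim/big_ind2: _ => //; first by rewrite dotv0r.
by move=> a b c e <- <-; rewrite dotvDr.
Qed.
Lemma dotvv_ge0 (x : vec) : 0 <= dot x x.
Proof. by rewrite /dotv sumr_ge0 // => i _; exact: sqr_ge0. Qed.
Lemma dotvv_eq0 (x : vec) : dot x x = 0 -> x = 0.
Proof.
move=> /eqP; rewrite /dotv psumr_eq0; last by move=> i _; exact: sqr_ge0.
move=> /allP H; apply/rowP => i; rewrite mxE.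
have := H i (mem_index_enum i); rewrite /= mulf_eq0 orbb => /eqP //.
Qed.
Lemma dotv_mx (u x : vec) : dot u x = (x *m u^T) 0 0.
Proof. by rewrite /dotv !mxE; apply: eq_bigr => i _; rewrite !mxE mulrC. Qed.

Lemma dotvDZl (c w x : vec) t : dot (c + t *: w) x = dot c x + t * dot w x.
Proof. by rewrite dotvDl dotvZl. Qed.

Lemma dotvv_affine (k : R) (x t : vec) :
  dot (k *: x + t) (k *: x + t) = k ^+ 2 * dot x x + 2 * k * dot x t + dot t t.
Proof. rewrite !(dotvDl, dotvDr, dotvZl, dotvZr) (dotvC t x); lra. Qed.

Lemma sphere_radius_neq0 (x y : vec) r : x != y -> dot x x = r -> dot y y = r -> r != 0.
Proof.
move=> xy Hx Hy; apply/eqP => r0; move: xy.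
by rewrite (dotvv_eq0 (etrans Hx r0)) (dotvv_eq0 (etrans Hy r0)) eqxx.
Qed.

Lemma triangle_scale_eq (u a b c : vec) mu m0 m1 : c != a ->
  dot u (b - a) = 1 -> dot u (c - a) = 0 ->
  mu *: (b - a) + m1 *: (c - b) = m0 *: (c - a) -> mu = m0.
Proof.
move=> ca ub uc rel.
have m1E : m1 = mu.
  have cb : c - b = (c - a) - (b - a) by rewrite opprB addrA subrK.
  by have := congr1 (dot u) rel; rewrite dotvDr !dotvZr cb (dotvBr (c - a)) ub uc; lra.
move: rel; rewrite m1E -scalerDr addrC subrKA; apply: scalerIr.
by rewrite subr_eq0.
Qed.
End InnerProduct.

Lemma sup_eq_max (R : realType) (E : set R) a : E a -> (forall y, E y -> y <= a) -> sup E = a.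
Proof.
move=> Ea Hub; apply/eqP; rewrite eq_le; apply/andP; split.
  by apply: ge_sup; [exists a | move=> y /Hub].
by apply: (ub_le_sup _ Ea); exists a => y /Hub.
Qed.

Section Faces.
Variables (R : realType) (d : nat).
Local Notation vec := 'rV[R]_d.
Local Notation dot := (@dotv R d).
Implicit Types (S : set vec) (c u v w x y : vec).

Lemma face_dir_sub S c : face_dir S c `<=` S.
Proof. by move=> x []. Qed.

Lemma face_dir_max S c x y : face_dir S c x -> S y -> dot c y <= dot c x.
Proof. by case=> _ H /H. Qed.

Lemma face_dir_dotv_eq S c x y : face_dir S c x -> face_dir S c y -> dot c x = dot c y.
Proof.
move=> fx fy; apply/eqP; rewrite eq_le (face_dir_max fx (face_dir_sub fy)).
by rewrite (face_dir_max fy (face_dir_sub fx)).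
Qed.

Lemma face_dir_scale S c t : 0 <= t -> face_dir S c `<=` face_dir S (t *: c).
Proof.
move=> t0 x [Sx Hx]; split => // y Sy; rewrite !dotvZl.
by apply: ler_wpM2l => //; apply: Hx.
Qed.

Lemma vertex_dotv_lt S c a y : face_dir S c = [set a] -> S y -> y != a ->
  dot c y < dot c a.
Proof.
move=> Hc Sy ya; have fa : face_dir S c a by rewrite Hc.
have [_ Hm] := fa.
rewrite lt_neqAle (Hm y Sy) andbT; apply: contra ya => /eqP E.
have : face_dir S c y.
  split => // z Sz; rewrite E; exact: Hm z Sz.
by rewrite Hc => ->.
Qed.

Lemma vertex_mem S v : is_vertex S v -> S v.
Proof. by case=> c Hc; have [] : face_dir S c v by rewrite Hc. Qed.

Lemma support_face_dir S u w : face_dir S u w -> Defs.support S u = dot u w.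
Proof.
by case=> Sw Hw; apply: sup_eq_max; [exists w | move=> y [x Sx <-]; apply: Hw].
Qed.

Lemma normal_cone_face_dir S (G : set vec) c : G `<=` S ->
  normal_cone S G c <-> G `<=` face_dir S c.
Proof.
move=> GS; split.
  by move=> H x Gx; split; [exact: GS | move=> y Sy; exact: H].
by move=> H x y Gx Sy; case: (H x Gx) => _; apply.
Qed.

End Faces.

Lemma exists_argmax (R : realDomainType) (I : finType) (P : pred I) (f : I -> R) :
  (exists i, P i) -> exists i, P i /\ forall j, P j -> f j <= f i.
Proof.
case=> i0 Pi0; case: (@arg_maxP _ R I i0 P f Pi0) => i Pi Hi.
by exists i; split.
Qed.

Lemma exists_argmin (R : realDomainType) (I : finType) (P : pred I) (f : I -> R) :
  (exists i, P i) -> exists i, P i /\ forall j, P j -> f i <= f j.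
Proof.
move=> /(exists_argmax (fun i => - f i)) [i [Pi Hi]]; exists i; split => // j Pj.
by rewrite -lerN2 Hi.
Qed.

Lemma exists_pos_lbound (R : realDomainType) (I : finType) (f : I -> R) :
  (forall i, 0 < f i) -> exists2 e, 0 < e & forall i, e <= f i.
Proof.
move=> H; case: (pselect (exists i : I, true)) => [/(exists_argmin f) [i [_ Hi]]|N].
  by exists (f i) => // j; exact: Hi.
by exists 1 => // i; exfalso; apply: N; exists i.
Qed.

Lemma third_elem (T : eqType) (s : seq T) (p q : T) : (2 < size s)%N -> uniq s ->
  exists2 r, r \in s & ((r != p) && (r != q)).
Proof.
move=> sz us; apply/hasP; apply: contraT => /hasPn H.
have : (size s <= size [:: p; q])%N.
  apply: uniq_leq_size => // v vs; have := H v vs.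
  by rewrite negb_and !negbK !inE => /orP [] ->; rewrite ?orbT.
by rewrite /=; lia.
Qed.

Section ConvexHull.
Variables (R : realType) (d : nat) (V : seq 'rV[R]_d).
Local Notation vec := 'rV[R]_d.
Local Notation dot := (@dotv R d).
Local Notation n := (size V).
Local Notation pt i := (V`_(@nat_of_ord (size V) i)).
Local Notation P := (conv V).

Definition attains (c : vec) (i : 'I_n) : bool := [forall j : 'I_n, dot c (pt j) <= dot c (pt i)].

Lemma attainsP c i : reflect (forall j, dot c (pt j) <= dot c (pt i)) (attains c i).
Proof. exact: forallP. Qed.

Lemma attains_dotv_eq c i j : attains c i -> attains c j -> dot c (pt i) = dot c (pt j).
Proof. by move=> /attainsP Hi /attainsP Hj; apply/eqP; rewrite eq_le Hi Hj. Qed.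

Lemma attains_exists c : (0 < n)%N -> exists i, attains c i.
Proof.
move=> n0; have [|i [_ Hi]] := @exists_argmax R _ predT (fun i : 'I_n => dot c (pt i)).
  by exists (Ordinal n0).
by exists i; apply/attainsP => j; exact: Hi.
Qed.

Lemma dotv_comb (c : vec) (l : 'I_n -> R) :
  dot c (\sum_i l i *: pt i) = \sum_i l i * dot c (pt i).
Proof. by rewrite dotv_sumr; apply: eq_bigr => i _; rewrite dotvZr. Qed.

Lemma dotv_comb_le (c : vec) (l : 'I_n -> R) M :
  (forall i, 0 <= l i) -> \sum_i l i = 1 -> (forall i, l i != 0 -> dot c (pt i) <= M) ->
  dot c (\sum_i l i *: pt i) <= M.
Proof.
move=> l0 l1 H; rewrite dotv_comb.
apply: (@le_trans _ _ (\sum_i l i * M)); last by rewrite -mulr_suml l1 mul1r.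
apply: ler_sum => i _; have [->|li] := eqVneq (l i) 0; first by rewrite !mul0r.
by rewrite ler_wpM2l // H.
Qed.

Lemma dotv_comb_eq (c : vec) (l : 'I_n -> R) M :
  \sum_i l i = 1 -> (forall i, l i != 0 -> dot c (pt i) = M) ->
  dot c (\sum_i l i *: pt i) = M.
Proof.
move=> l1 H; rewrite dotv_comb.
rewrite -[RHS]mul1r -l1 mulr_suml; apply: eq_bigr => i _.
by have [->|li] := eqVneq (l i) 0; [rewrite !mul0r | rewrite H].
Qed.

Lemma conv_pt i : P (pt i).
Proof.
exists (fun j => (j == i)%:R); split; first by move=> j; rewrite ler0n.
split; first by rewrite (bigD1 i) //= eqxx big1 ?addr0 // => j /negbTE ->.
rewrite (bigD1 i) //= eqxx scale1r big1 ?addr0 // => j /negbTE ->.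
by rewrite scale0r.
Qed.

Lemma conv_size_gt0 x : P x -> (0 < n)%N.
Proof.
case=> l [_ [l1 _]]; case: n l l1 => // l; rewrite big_ord0 => /eqP.
by rewrite eq_sym oner_eq0.
Qed.

Lemma conv_dotv_le (c : vec) x M : P x -> (forall i, dot c (pt i) <= M) -> dot c x <= M.
Proof. by case=> l [l0 [l1 ->]] H; apply: dotv_comb_le. Qed.

Lemma weight_neq0 (l : 'I_n -> R) : \sum_i l i = 1 -> exists i, l i != 0.
Proof.
move=> l1; apply/existsP; apply: contraT; rewrite negb_exists => /forallP H.
move: l1; rewrite big1 => [/eqP|i _]; first by rewrite eq_sym oner_eq0.
by move/negPn: (H i) => /eqP.
Qed.

Lemma face_dirE (c : vec) x :
  face_dir P c x <-> exists l : 'I_n -> R, [/\ (forall i, 0 <= l i), \sum_i l i = 1,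
     (forall i, l i != 0 -> attains c i) & x = \sum_i l i *: pt i].
Proof.
split.
  case=> [[l [l0 [l1 ->]]] Hmax]; exists l; split => // i li.
  have n0 : (0 < n)%N by apply: (conv_size_gt0 (conv_pt i)).
  have [i0 ai0] := attains_exists c n0.
  have hx := Hmax _ (conv_pt i0).
  set h := dot c (pt i0) in hx.
  have Hs : \sum_j l j * (h - dot c (pt j)) = 0.
    apply/eqP; rewrite eq_le; apply/andP; split.
      rewrite (eq_bigr (fun j => l j * h - l j * dot c (pt j))); last by move=> j _; rewrite mulrBr.
      by rewrite sumrB -mulr_suml l1 mul1r -dotv_comb subr_le0.
    by apply: sumr_ge0 => j _; rewrite mulr_ge0 // subr_ge0; move/attainsP: ai0.
  have H0 : forall j, 0 <= h - dot c (pt j) by move=> j; rewrite subr_ge0; move/attainsP: ai0.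
  have := @psumr_eq0P _ _ predT (fun j => l j * (h - dot c (pt j)))
    (fun j _ => mulr_ge0 (l0 j) (H0 j)) Hs i isT.
  move=> /eqP; rewrite mulf_eq0 (negbTE li) /= subr_eq0 => /eqP hi.
  by apply/attainsP => j; rewrite -hi; move/attainsP: ai0.
case=> l [l0 l1 la ->]; split; first by exists l.
have [i li] := weight_neq0 l1.
have Hx : dot c (\sum_i l i *: pt i) = dot c (pt i).
  by apply: dotv_comb_eq => // j lj; apply: attains_dotv_eq; [apply: la | apply: la].
move=> y Py; rewrite Hx; apply: conv_dotv_le Py _ => j.
by move/attainsP: (la _ li).
Qed.

Lemma face_dir_pt c i : face_dir P c (pt i) <-> attains c i.
Proof.
split; first by case=> _ H; apply/attainsP => j; apply: H; exact: conv_pt.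
move=> ai; split; first exact: conv_pt.
by move=> y Py; apply: conv_dotv_le Py _ => j; move/attainsP: ai.
Qed.

Lemma face_dir_subset c c' : (forall i, attains c i -> attains c' i) ->
  face_dir P c `<=` face_dir P c'.
Proof.
move=> sub x /face_dirE [l [l0 l1 la ->]].
by apply/face_dirE; exists l; split => // i /la /sub.
Qed.

Lemma face_dir_neq0 c : (0 < n)%N -> face_dir P c !=set0.
Proof. by move=> n0; have [i ai] := attains_exists c n0; exists (pt i); apply/face_dir_pt. Qed.

End ConvexHull.

Section Perturbation.
Variables (R : realType) (d : nat) (V : seq 'rV[R]_d).
Local Notation vec := 'rV[R]_d.
Local Notation dot := (@dotv R d).
Local Notation n := (size V).
Local Notation pt i := (V`_(@nat_of_ord (size V) i)).
Local Notation P := (conv V).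
Local Notation attains := (@attains R d V).

Definition lex_attains (c w : vec) (i : 'I_n) : bool :=
  attains c i && [forall j, attains c j ==> (dot w (pt j) <= dot w (pt i))].

Lemma attains_perturb_strict (c w : vec) : exists2 e, 0 < e & forall t, 0 < t -> t <= e ->
  forall i j, attains c i -> ~~ attains c j ->
  dot (c + t *: w) (pt j) < dot (c + t *: w) (pt i).
Proof.
case: (posnP n) => [n0|n0].
  by exists 1 => // t _ _ [i Hi]; exfalso; move: Hi; rewrite n0.
have [i0 a0] := attains_exists c n0.
set h := dot c (pt i0).
set K := \sum_k `|dot w (pt k)|.
have K0 : 0 <= K by apply: sumr_ge0 => k _.
have Kk k : `|dot w (pt k)| <= K by rewrite /K (bigD1 k) //= lerDl sumr_ge0.
have hgt j : ~~ attains c j -> dot c (pt j) < h.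
  move=> /attainsP nj; rewrite ltNge; apply/negP => hj; apply: nj => k.
  by apply: le_trans hj; move/attainsP: a0.
(* With t <= f j the gap h - c.pt j of a non-maximal point dominates t times the
   swing 2K of w. *)
pose f j := if attains c j then 1 else (h - dot c (pt j)) / (2 * K + 1).
have f0 j : 0 < f j.
  rewrite /f; case: ifP => // /negbT /hgt hj.
  by rewrite divr_gt0 ?subr_gt0 // ltr_wpDl // mulr_ge0.
have [e e0 fe] := exists_pos_lbound f0.
exists e => // t t0 te i j ai nj; rewrite !dotvDZl.
have hi : dot c (pt i) = h by apply: attains_dotv_eq.
have ej : t * (2 * K + 1) <= h - dot c (pt j).
  have := fe j; rewrite /f (negbTE nj) => ej.
  by rewrite -ler_pdivlMr ?ltr_wpDl ?mulr_ge0 //; apply: le_trans ej.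
have b : dot w (pt j) - dot w (pt i) <= 2 * K.
  rewrite mulr2n mulrDl mul1r; apply: (le_trans (ler_norm _)).
  by apply: (le_trans (ler_normB _ _)); apply: lerD.
have b' := ler_wpM2l (ltW t0) b.
rewrite hi; nra.
Qed.

Lemma lex_attains_perturb (c w : vec) : exists2 e, 0 < e & forall t, 0 < t -> t <= e ->
  forall i, attains (c + t *: w) i = lex_attains c w i.
Proof.
have [e e0 He] := attains_perturb_strict c w.
exists e => // t t0 te i; apply/idP/idP.
  move=> ai; have [i0 a0] := attains_exists c (leq_ltn_trans (leq0n i) (ltn_ord i)).
  have aci : attains c i.
    apply: contraT => ni; have := He t t0 te _ _ a0 ni.
    by move/attainsP: ai => /(_ i0) H /(le_lt_trans H); rewrite ltxx.
  rewrite /lex_attains aci /=; apply/forallP => j; apply/implyP => aj.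
  move/attainsP: ai => /(_ j); rewrite !dotvDZl (attains_dotv_eq aj aci) lerD2l.
  by rewrite ler_pM2l.
case/andP => aci /forallP Hw; apply/attainsP => j.
case: (boolP (attains c j)) => aj.
  by rewrite !dotvDZl (attains_dotv_eq aj aci) lerD2l ler_pM2l // (implyP (Hw j)).
by apply: ltW; apply: He.
Qed.

Lemma lex_attains_attains c w i : lex_attains c w i -> attains c i.
Proof. by case/andP. Qed.

Lemma face_dir_perturb (c w : vec) : exists2 e, 0 < e & forall t, 0 < t -> t <= e ->
  face_dir P (c + t *: w) =
  [set x | face_dir P c x /\ forall y, face_dir P c y -> dot w y <= dot w x].
Proof.
have [e e0 He] := lex_attains_perturb c w; exists e => // t t0 te.
apply/seteqP; split => x /=.
  move=> /face_dirE [l [l0 l1 la ->]].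
  have la' i : l i != 0 -> lex_attains c w i by move=> /la; rewrite He.
  split; first by apply/face_dirE; exists l; split => // i /la'/lex_attains_attains.
  have [i li] := weight_neq0 l1.
  move=> y /face_dirE [m [m0 m1 ma ->]].
  have -> : dot w (\sum_i l i *: pt i) = dot w (pt i).
    apply: dotv_comb_eq => // j lj; apply/eqP; rewrite eq_le.
    case/andP: (la' _ li) => ai /forallP Hi; case/andP: (la' _ lj) => aj /forallP Hj.
    by rewrite (implyP (Hi j) aj) (implyP (Hj i) ai).
  apply: dotv_comb_le => // j mj; case/andP: (la' _ li) => _ /forallP Hi.
  exact: (implyP (Hi j) (ma _ mj)).
case=> fx Hx; split; first exact: face_dir_sub fx.
have [i ai] := attains_exists (c + t *: w) (conv_size_gt0 (face_dir_sub fx)).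
move=> y Py; apply: (le_trans (face_dir_max (proj2 (face_dir_pt _ _) ai) Py)).
have aci : attains c i by move: ai; rewrite He // => /lex_attains_attains.
rewrite !dotvDZl (face_dir_dotv_eq (proj2 (face_dir_pt _ _) aci) fx) lerD2l ler_pM2l //.
by apply: Hx; apply/face_dir_pt.
Qed.

(* Among the maximizers of c, one of largest norm is a vertex, exposed by
   c + e x for small e > 0. *)
Lemma face_dir_vertex c : (0 < n)%N -> exists v, is_vertex P v /\ face_dir P c v.
Proof.
move=> n0; have [i0 a0] := attains_exists c n0.
have [im [ais Hs]] :=
  @exists_argmax R _ (attains c) (fun i => dot (pt i) (pt i)) (ex_intro _ i0 a0).
set x := pt im in Hs *.
have exq j : dot (x - pt j) (x - pt j) = dot x x - 2 * dot x (pt j) + dot (pt j) (pt j).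
  by rewrite !(dotvBl, dotvBr) (dotvC (pt j) x); lra.
have dotx_le j : attains c j -> dot x (pt j) <= dot x x.
  by move=> aj; have := dotvv_ge0 (x - pt j); have := Hs j aj; rewrite exq; lra.
have dotx_ge_eq j : attains c j -> dot x x <= dot x (pt j) -> pt j = x.
  move=> aj h1; have := dotvv_ge0 (x - pt j); have := Hs j aj; rewrite exq => h2 h3.
  apply/eqP; rewrite eq_sym -subr_eq0; apply/eqP/dotvv_eq0; rewrite exq; lra.
have [e e0 He] := lex_attains_perturb c x.
exists x; split; last by apply/face_dir_pt.
exists (c + e *: x); apply/seteqP; split => y /=.
  move=> /face_dirE [l [l0 l1 la ->]].
  rewrite (eq_bigr (fun i => l i *: x)); first by rewrite -scaler_suml l1 scale1r.
  move=> i _; have [->|li] := eqVneq (l i) 0; first by rewrite !scale0r.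
  have := la _ li; rewrite He // => /andP [ai /forallP Hi].
  have := implyP (Hi im) ais; rewrite -/x => H1.
  by rewrite (dotx_ge_eq i ai H1).
move=> ->; apply/face_dir_pt; rewrite He // /lex_attains ais /=.
by apply/forallP => j; apply/implyP => aj; exact: dotx_le.
Qed.

(* The extrema of u over the face are exposed by c +- e u, and contain vertices. *)
Lemma face_dir_dotv_const c (u : vec) k :
  (forall v, is_vertex P v -> face_dir P c v -> dot u v = k) ->
  forall x, face_dir P c x -> dot u x = k.
Proof.
move=> Hv x fx; have n0 := conv_size_gt0 (face_dir_sub fx).
have [e e0 He] := face_dir_perturb c u.
have [e' e0' He'] := face_dir_perturb c (- u).
have [v [vv fv]] := face_dir_vertex (c + e *: u) n0.
have [v' [vv' fv']] := face_dir_vertex (c + e' *: - u) n0.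
rewrite He // in fv; rewrite He' // in fv'.
case: fv => fv Hu; case: fv' => fv' Hu'.
apply/eqP; rewrite eq_le; apply/andP; split.
  by rewrite -(Hv v vv fv) Hu.
by rewrite -(Hv v' vv' fv') -lerN2 -!dotvNl Hu'.
Qed.

Lemma face_dir_vertex_neq c (u : vec) k x : face_dir P c x -> dot u x != k ->
  exists z, [/\ is_vertex P z, face_dir P c z & dot u z != k].
Proof.
move=> fx /eqP ux; apply: contrapT => N; apply: ux.
apply: face_dir_dotv_const fx => v vv fv; apply/eqP; apply: contra_notT N => nv.
by exists v.
Qed.

End Perturbation.

Section NormalFan.
Variables (R : realType) (d : nat).
Local Notation vec := 'rV[R]_d.
Local Notation dot := (@dotv R d).

Lemma classical_set1_inj (a b : vec) : [set a] = [set b] -> a = b.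
Proof. by move=> E; have : [set b] a by rewrite -E. Qed.

Lemma face_dir_sub_transfer (S T : set vec) c c' :
  normal_fan S = normal_fan T -> (face_dir T c !=set0) ->
  face_dir S c = face_dir S c' -> face_dir T c `<=` face_dir T c'.
Proof.
move=> hF ne E.
have : normal_fan T (normal_cone T (face_dir T c)).
  by exists (face_dir T c); split => //; exists c.
rewrite -hF => -[G [[g [Gg Gne]] EN]].
have GS : G `<=` S by rewrite Gg => x [].
have cN : normal_cone T (face_dir T c) c.
  by apply/normal_cone_face_dir => //; move=> x [].
have FT : face_dir T c `<=` T by move=> x [].
have : normal_cone T (face_dir T c) c'.
  rewrite EN; apply/(normal_cone_face_dir _ GS); rewrite -E; apply/(normal_cone_face_dir _ GS).
  by rewrite -EN.
by move/(normal_cone_face_dir _ FT).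
Qed.

Lemma face_dir_eq_transfer (S T : set vec) c c' :
  normal_fan S = normal_fan T -> (forall c, face_dir T c !=set0) ->
  face_dir S c = face_dir S c' -> face_dir T c = face_dir T c'.
Proof.
move=> hF ne E; apply/seteqP; split; first exact: (face_dir_sub_transfer hF (ne c) E).
exact: (face_dir_sub_transfer hF (ne c') (esym E)).
Qed.

Variables (V W : seq vec).
Local Notation P := (conv V).
Local Notation Q := (conv W).
Hypothesis hF : normal_fan P = normal_fan Q.
Hypothesis Vn : (0 < size V)%N.
Hypothesis Wn : (0 < size W)%N.

Lemma face_dir_eq_PQ c c' : face_dir P c = face_dir P c' -> face_dir Q c = face_dir Q c'.
Proof. exact: face_dir_eq_transfer hF (fun c => face_dir_neq0 c Wn). Qed.
Lemma face_dir_eq_QP c c' : face_dir Q c = face_dir Q c' -> face_dir P c = face_dir P c'.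
Proof. exact: face_dir_eq_transfer (esym hF) (fun c => face_dir_neq0 c Vn). Qed.

Lemma face_dir_set1_transfer (V1 V2 : seq vec) c v :
  (forall c c', face_dir (conv V1) c = face_dir (conv V1) c' ->
                face_dir (conv V2) c = face_dir (conv V2) c') ->
  (0 < size V2)%N ->
  face_dir (conv V1) c = [set v] -> exists w, face_dir (conv V2) c = [set w].
Proof.
move=> cl n2 Hv; have [x fx] := face_dir_neq0 c n2; exists x.
apply/seteqP; split => y /=; last by move=> ->.
move=> fy; have [e e0 He] := face_dir_perturb V1 c (x - y).
have E1 : face_dir (conv V1) (c + e *: (x - y)) = face_dir (conv V1) c.
  rewrite He // Hv; apply/seteqP; split => z /=; first by case.
  by move=> ->; split => // z' ->.
have E2 := cl _ _ E1.
have fx' : face_dir (conv V2) (c + e *: (x - y)) x by rewrite E2.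
have fy' : face_dir (conv V2) (c + e *: (x - y)) y by rewrite E2.
have h1 := face_dir_dotv_eq fx' fy'; have h2 := face_dir_dotv_eq fx fy.
rewrite !dotvDZl h2 in h1.
have : e * dot (x - y) (x - y) = 0 by rewrite dotvBr; lra.
move=> /eqP; rewrite mulf_eq0 gt_eqF //= => /eqP /dotvv_eq0 /eqP.
by rewrite subr_eq0 => /eqP ->.
Qed.

Definition matched v w := exists c, face_dir P c = [set v] /\ face_dir Q c = [set w].

Lemma matched_exists v : is_vertex P v -> exists w, matched v w.
Proof.
case=> c Hc; have [w Hw] := face_dir_set1_transfer face_dir_eq_PQ Wn Hc.
by exists w, c.
Qed.

(* Junk value 0 when v is not a vertex of P. *)
Definition vertex_map v : vec :=
  match pselect (exists w, matched v w) with left H => proj1_sig (cid H) | right _ => 0 end.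

Lemma vertex_mapP v : is_vertex P v -> matched v (vertex_map v).
Proof.
move=> vv; rewrite /vertex_map; case: pselect => [H|N]; first by case: (cid H).
by exfalso; apply: N; exact: matched_exists.
Qed.

Lemma face_dir_vertex_map v c : is_vertex P v ->
  face_dir P c = [set v] -> face_dir Q c = [set vertex_map v].
Proof.
move=> vv Hc; have [c0 [H1 H2]] := vertex_mapP vv.
by rewrite -H2; apply: face_dir_eq_PQ; rewrite Hc H1.
Qed.

Lemma vertex_map_vertex v : is_vertex P v -> is_vertex Q (vertex_map v).
Proof. by move=> vv; have [c0 [H1 H2]] := vertex_mapP vv; exists c0. Qed.

Lemma vertex_map_inj v v' : is_vertex P v -> is_vertex P v' ->
  vertex_map v = vertex_map v' -> v = v'.
Proof.
move=> vv vv' E; have [c [H1 H2]] := vertex_mapP vv; have [c' [H1' H2']] := vertex_mapP vv'.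
apply: classical_set1_inj; rewrite -H1 -H1'; apply: face_dir_eq_QP.
by rewrite H2 H2' E.
Qed.

Lemma vertex_map_surj w : is_vertex Q w -> exists v, is_vertex P v /\ vertex_map v = w.
Proof.
case=> c Hc; have [v Hv] := face_dir_set1_transfer face_dir_eq_QP Vn Hc.
have vv : is_vertex P v by exists c.
exists v; split => //; apply: classical_set1_inj; rewrite -Hc; symmetry; exact: face_dir_vertex_map.
Qed.

End NormalFan.

Section Edges.
Variables (R : realType) (d : nat).
Local Notation vec := 'rV[R]_d.
Local Notation dot := (@dotv R d).

Lemma parallel_of_dotv_eq (x y a b : vec) : a != b ->
  (forall w, dot w a = dot w b -> dot w x = dot w y) ->
  exists mu, x - y = mu *: (b - a).
Proof.
move=> ab H; set del := b - a; set z := x - y.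
(* [w] is the component of [z] orthogonal to [del]; it is orthogonal to [z]
   as well. *)
pose w := dot del del *: z - dot z del *: del.
have wd : dot w del = 0.
  by rewrite /w dotvBl !dotvZl; lra.
have wz : dot w z = 0.
  rewrite /z dotvBr; apply/eqP; rewrite subr_eq0; apply/eqP; apply: H.
  by apply/eqP; rewrite -subr_eq0 -dotvBr -opprB dotvNr -/del wd oppr0.
have dd : dot del del != 0.
  by apply/eqP => /dotvv_eq0 /eqP; rewrite subr_eq0 eq_sym (negbTE ab).
have ww : dot w w = 0.
  rewrite {1}/w dotvBl !dotvZl (dotvC z w) (dotvC del w) wz wd; lra.
exists (dot z del / dot del del).
have := dotvv_eq0 ww; rewrite /w => /eqP; rewrite subr_eq0 => /eqP E.
apply: (@scalerI _ _ (dot del del)) => //.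
by rewrite E scalerA mulrCA mulfV ?mulr1.
Qed.

Variables (V W : seq vec).
Local Notation P := (conv V).
Local Notation Q := (conv W).
Hypothesis hF : normal_fan P = normal_fan Q.
Hypothesis Vn : (0 < size V)%N.
Hypothesis Wn : (0 < size W)%N.
Local Notation phi := (vertex_map V W).

Lemma vertex_map_face_dir c a : is_vertex P a -> face_dir P c a ->
  face_dir Q c (phi a) /\
  exists2 ca, face_dir P ca = [set a] & exists2 t, 0 < t &
   face_dir Q (c + t *: ca) = [set phi a].
Proof.
move=> va fa; have [ca Hca] := va.
have [e1 e10 H1] := face_dir_perturb V c ca.
have [e2 e20 H2] := face_dir_perturb W c ca.
set t := Num.min e1 e2.
have t0 : 0 < t by rewrite lt_min e10 e20.
have te1 : t <= e1 by rewrite ge_min lexx.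
have te2 : t <= e2 by rewrite ge_min lexx orbT.
have faa : face_dir P ca a by rewrite Hca.
have EP : face_dir P (c + t *: ca) = [set a].
  rewrite H1 //; apply/seteqP; split => z /=.
    case=> fz Hz; have := Hz a fa => hz.
    have : face_dir P ca z.
      split; first by case: fz.
      by move=> y Py; apply: le_trans hz; exact: face_dir_max faa Py.
    by rewrite Hca.
  move=> ->; split => // y fy; exact: face_dir_max faa (face_dir_sub fy).
have EQ := face_dir_vertex_map hF Wn va EP.
split; last by exists ca => //; exists t.
by move: EQ; rewrite H2 // => /seteqP [_ /(_ (phi a) erefl)] [].
Qed.

Lemma vertex_map_edge_orth c a b : is_vertex P a -> is_vertex P b ->
  face_dir P c a -> face_dir P c b ->
  (forall w, dot w a = dot w b -> forall x, face_dir P c x -> dot w x = dot w a) ->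
  forall w, dot w a = dot w b -> dot w (phi b) = dot w (phi a).
Proof.
move=> va vb fa fb Hw w wab.
have [fpa _] := vertex_map_face_dir va fa; have [fpb _] := vertex_map_face_dir vb fb.
have [e e0 He] := face_dir_perturb V c w.
have E1 : face_dir P (c + e *: w) = face_dir P c.
  rewrite He //; apply/seteqP; split => z /=; first by case.
  by move=> fz; split => // y fy; rewrite (Hw w wab _ fy) (Hw w wab _ fz).
have E2 := face_dir_eq_PQ hF Wn E1.
have f1 : face_dir Q (c + e *: w) (phi a) by rewrite E2.
have f2 : face_dir Q (c + e *: w) (phi b) by rewrite E2.
have h1 := face_dir_dotv_eq f1 f2; have h2 := face_dir_dotv_eq fpa fpb.
rewrite !dotvDZl h2 in h1.
have : e * dot w (phi a) = e * dot w (phi b) by lra.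
by move/(mulfI (negbT (gt_eqF e0))) => ->.
Qed.

(* The direction ca exposing a in P also exposes phi a in Q after a small
   tilt, so b - a and phi b - phi a both decrease ca: mu is positive. *)
Lemma vertex_map_edge c a b : is_vertex P a -> is_vertex P b -> a != b ->
  face_dir P c a -> face_dir P c b ->
  (forall w, dot w a = dot w b -> forall x, face_dir P c x -> dot w x = dot w a) ->
  exists2 mu, 0 < mu & phi b - phi a = mu *: (b - a).
Proof.
move=> va vb ab fa fb Hw.
have [fpa [ca Hca [t t0 Hta]]] := vertex_map_face_dir va fa.
have [fpb _] := vertex_map_face_dir vb fb.
have [mu Hmu] := parallel_of_dotv_eq ab (vertex_map_edge_orth va vb fa fb Hw).
exists mu => //.
have npab : phi b != phi a.
  by apply/eqP => /(vertex_map_inj hF Vn Wn vb va) E; move: ab; rewrite E eqxx.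
have Qb : Q (phi b) by case: fpb.
have lt1 := vertex_dotv_lt Hta Qb npab.
rewrite !dotvDZl (face_dir_dotv_eq fpa fpb) ltrD2l ltr_pM2l // in lt1.
have Pb : P b by case: fb.
have ba : b != a by rewrite eq_sym.
have lt2 := vertex_dotv_lt Hca Pb ba.
have : dot ca (phi b - phi a) < 0 by rewrite dotvBr; lra.
rewrite Hmu dotvZr dotvBr => h.
nra.
Qed.

End Edges.

Section Orthogonality.
Variables (R : realType) (d : nat).
Local Notation vec := 'rV[R]_d.
Local Notation dot := (@dotv R d).

Lemma mulmx_tr_entry m (M : 'M[R]_(m, d)) (w : vec) i :
  (M *m w^T) i 0 = dot w (row i M).
Proof. by rewrite dotv_mx -row_mul [RHS]mxE. Qed.

Lemma mulmx_tr_eq0 m (M : 'M[R]_(m, d)) (w : vec) :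
  M *m w^T = 0 <-> forall i, dot w (row i M) = 0.
Proof.
split.
  by move=> E i; rewrite -mulmx_tr_entry E mxE.
by move=> H; apply/matrixP => i j; rewrite (ord1 j) mulmx_tr_entry H mxE.
Qed.

Lemma rank_orth_leq m (M : 'M[R]_(m, d)) (w : vec) :
  w != 0 -> M *m w^T = 0 -> (\rank M <= d.-1)%N.
Proof.
move=> w0 E.
have : (w <= kermx M^T)%MS by rewrite sub_kermx -[w]trmxK -trmx_mul E trmx0.
move/mxrankS; rewrite mxrank_ker mxrank_tr rank_rV w0.
lia.
Qed.

Lemma exists_orth m (M : 'M[R]_(m, d)) (c : vec) :
  (\rank M < d.-1)%N -> exists w : vec, [/\ w != 0, M *m w^T = 0 & dot w c = 0].
Proof.
move=> rk.
set N := col_mx M c.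
have rN : (\rank N < d)%N.
  rewrite /N -(addsmxE M c).1.
  have := mxrank_adds_leqif M c; move=> [H _].
  apply: (leq_ltn_trans H); rewrite rank_rV.
  by case: (c != 0) => /=; lia.
set K := kermx N^T.
have K0 : K != 0.
  by rewrite -mxrank_eq0 mxrank_ker mxrank_tr subn_eq0 -ltnNge.
have [i wi] : exists i, row i K != 0.
  apply/existsP; apply: contraT; rewrite negb_exists => /forallP H.
  case/negP: K0; apply/eqP/row_matrixP => i.
  by rewrite row0; apply/eqP; move: (H i); rewrite negbK.
set w := row i K.
have : (w <= K)%MS by exact: row_sub.
rewrite sub_kermx => /eqP E.
have E' : N *m w^T = 0 by rewrite -[N]trmxK -trmx_mul E trmx0.
move: E'; rewrite /N mul_col_mx => /eqP; rewrite col_mx_eq0 => /andP [/eqP E1 /eqP E2].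
exists w; split => //.
by rewrite dotv_mx E2 mxE.
Qed.

Lemma row_free_solve k (X : 'M[R]_(k, d)) : row_free X ->
  forall g : 'I_k -> R, exists u : vec, forall i, dot u (row i X) = g i.
Proof.
move=> /row_freeP [B XB] g.
exists ((B *m \col_i g i)^T) => i.
by rewrite -mulmx_tr_entry trmxK mulmxA XB mul1mx mxE.
Qed.

Lemma orth_corank1_parallel k (X : 'M[R]_(k, d)) (nn tau : vec) :
  \rank X = d.-1 -> (0 < d)%N -> nn != 0 -> X *m nn^T = 0 -> X *m tau^T = 0 ->
  exists beta, tau = beta *: nn.
Proof.
move=> rX d0 n0 Xn Xt.
have sn : (nn <= kermx X^T)%MS by rewrite sub_kermx -[nn]trmxK -trmx_mul Xn trmx0.
have st : (tau <= kermx X^T)%MS by rewrite sub_kermx -[tau]trmxK -trmx_mul Xt trmx0.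
have rk : \rank (kermx X^T) = 1%N.
  by rewrite mxrank_ker mxrank_tr rX; lia.
have [_ E] := mxrank_leqif_sup sn.
have : (kermx X^T <= nn)%MS by rewrite -E rank_rV n0 rk.
move=> kn; have /submxP [D ->] := submx_trans st kn.
by exists (D 0 0); rewrite {1}[D]mx11_scalar mul_scalar_mx.
Qed.

Lemma rowsub_rank_cast (S : set vec) m k (M : 'M[R]_(m, d)) : \rank M = k ->
  (forall i, S (row i M)) ->
  exists K : 'M[R]_(k, d), [/\ forall i, S (row i K), \rank K = k & (M <= K)%MS].
Proof.
move=> Hk HS; subst k.
exists (rowsub (maxrankfun M) M); split.
- by move=> i; rewrite row_rowsub.
- by rewrite (eq_maxrowsub M).
- by rewrite (eq_maxrowsub M).
Qed.

Lemma mulmx_col m p q (A : 'M[R]_(m, p)) (C : 'M[R]_(p, q)) j :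
  A *m col j C = col j (A *m C).
Proof. by apply/matrixP => i k; rewrite !mxE; apply: eq_bigr => l _; rewrite !mxE. Qed.

Lemma submx_of_orth m k (M : 'M[R]_(m, d)) (X : 'M[R]_(k, d)) :
  (forall u : vec, X *m u^T = 0 -> M *m u^T = 0) -> (M <= X)%MS.
Proof.
move=> H; rewrite submxE; apply/eqP/matrixP => i j.
have := H (col j (cokermx X))^T; rewrite trmxK mulmx_col => E.
have E0 : col j (X *m cokermx X) = 0 by rewrite mulmx_coker; apply/matrixP => a b; rewrite !mxE.
have := congr1 (fun A : 'M[R]_(m, 1) => A i 0) (E E0).
by rewrite mulmx_col !mxE.
Qed.

End Orthogonality.

Section Tilting.
Variables (R : realType) (d : nat) (V : seq 'rV[R]_d).
Local Notation vec := 'rV[R]_d.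
Local Notation dot := (@dotv R d).
Local Notation n := (size V).
Local Notation pt i := (V`_(@nat_of_ord (size V) i)).
Local Notation P := (conv V).
Local Notation attains := (@attains R d V).

Definition fulldim := forall (w : vec) a, (forall i, dot w (pt i) = dot w (pt a)) -> w = 0.

Lemma fulldim_of_aff : aff_dim_eq P d -> fulldim.
Proof.
case=> x0 [Px0 [[M [Mrows Mrk]] _]] w a Hw.
have Hx x : P x -> dot w x = dot w (pt a).
  by case=> l [l0 [l1 ->]]; apply: dotv_comb_eq.
have E : M *m w^T = 0.
  apply/mulmx_tr_eq0 => i; have [x Px <-] := Mrows i.
  by rewrite dotvBr (Hx _ Px) (Hx _ Px0) subrr.
have Mu : M \in unitmx by rewrite -row_free_unit /row_free Mrk.
apply: trmx_inj; rewrite trmx0.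
by rewrite -(mulKmx Mu w^T) E mulmx0.
Qed.

Definition face_mx (A : pred 'I_n) (a : 'I_n) : 'M[R]_(n, d) :=
  \matrix_i (if A i then pt i - pt a else 0).

Lemma face_mx_row A a i : row i (face_mx A a) = if A i then pt i - pt a else 0.
Proof. by rewrite rowK. Qed.

Lemma rank_face_mx_leq c a : c != 0 -> attains c a -> (\rank (face_mx (attains c) a) <= d.-1)%N.
Proof.
move=> c0 ac; apply: (rank_orth_leq c0); apply/mulmx_tr_eq0 => i.
rewrite face_mx_row; case: ifP => ai; last by rewrite dotv0r.
by rewrite dotvBr (attains_dotv_eq ai ac) subrr.
Qed.

Lemma tilt_attains (c w : vec) (om : R) :
  (0 < n)%N -> (forall i, attains c i -> dot w (pt i) = om) ->
  (exists j, om < dot w (pt j)) ->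
  exists t, [/\ 0 <= t, forall i, attains c i -> attains (c + t *: w) i &
     exists2 j, om < dot w (pt j) & attains (c + t *: w) j].
Proof.
move=> n0 Hom Hj.
have [i0 a0] := attains_exists c n0.
set h := dot c (pt i0).
have hle k : dot c (pt k) <= h by move/attainsP: a0.
(* The tilt stops at the first point above level om to reach the maximum. *)
pose f k := (h - dot c (pt k)) / (dot w (pt k) - om).
have [js [Jjs Hjs]] := @exists_argmin R _ [pred j | om < dot w (pt j)] f Hj.
rewrite /= in Jjs.
set t := f js.
have t0 : 0 <= t by rewrite /t /f divr_ge0 // subr_ge0 ?hle // ltW.
have bnd k : dot (c + t *: w) (pt k) <= h + t * om.
  rewrite dotvDZl; case: (ltP om (dot w (pt k))) => Hk.
    have := Hjs k Hk; rewrite -/t /f ler_pdivlMr ?subr_gt0 // => H.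
    have := hle k; nra.
  have := hle k; nra.
have vi i : attains c i -> dot (c + t *: w) (pt i) = h + t * om.
  by move=> ai; rewrite dotvDZl (Hom i ai) (attains_dotv_eq ai a0).
exists t; split => //.
  by move=> i ai; apply/attainsP => k; rewrite (vi i ai); exact: bnd.
exists js => //; apply/attainsP => k.
have -> : dot (c + t *: w) (pt js) = h + t * om.
  rewrite dotvDZl /t /f.
  have dz : dot w (pt js) - om != 0 by rewrite subr_eq0 gt_eqF.
  have hq := divfK dz (h - dot c (pt js)).
  move: hq; set q := _ / _ => hq; rewrite mulrBr in hq; lra.
exact: bnd.
Qed.

Hypothesis FD : fulldim.

Lemma fulldim_dotv_neq (w : vec) a : w != 0 -> exists j, dot w (pt j) != dot w (pt a).
Proof.
move=> w0; apply/existsP; apply: contraT; rewrite negb_exists => /forallP H.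
case/negP: w0; apply/eqP; apply: (FD (a := a)) => i.
by move: (H i); rewrite negbK => /eqP.
Qed.

Lemma fulldim_expose_neq0 c v : (0 < d)%N -> face_dir P c = [set v] -> c != 0.
Proof.
move=> d0 Hv; apply/eqP => c0; subst c.
have pt_v i : pt i = v.
  have : face_dir P 0 (pt i) by apply/face_dir_pt/attainsP => j; rewrite !dotv0l.
  by rewrite Hv.
have n0 : (0 < n)%N.
  have [Pv _] : face_dir P 0 v by rewrite Hv.
  exact: conv_size_gt0 Pv.
have one0 : const_mx 1 != 0 :> vec.
  by apply/eqP => /matrixP /(_ 0 (Ordinal d0)); rewrite !mxE; apply/eqP; exact: oner_neq0.
by have [j] := fulldim_dotv_neq (Ordinal n0) one0; rewrite !pt_v eqxx.
Qed.

(* [w] is orthogonal to c and to the current face but not constant on P; tilting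
   c along +-w adds a maximizer while keeping c nonzero. *)
Lemma tilt_step c a : c != 0 -> attains c a -> (\rank (face_mx (attains c) a) < d.-1)%N ->
  exists c', [/\ c' != 0, forall i, attains c i -> attains c' i &
    exists j, attains c' j && ~~ attains c j].
Proof.
move=> c0 ac rk.
have n0 : (0 < n)%N by apply: leq_ltn_trans (ltn_ord a).
have [w [w0 Mw wc]] := exists_orth c rk.
have Hw i : attains c i -> dot w (pt i) = dot w (pt a).
  move=> ai; move/mulmx_tr_eq0: Mw => /(_ i); rewrite face_mx_row ai dotvBr => /eqP.
  by rewrite subr_eq0 => /eqP.
have [j wj] := fulldim_dotv_neq a w0.
pose w' := if dot w (pt a) < dot w (pt j) then w else - w.
have Hw' i : attains c i -> dot w' (pt i) = dot w' (pt a).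
  by move=> ai; rewrite /w'; case: ifP => _; rewrite ?dotvNl (Hw i ai).
have Hj : exists j, dot w' (pt a) < dot w' (pt j).
  exists j; rewrite /w'; case: ifP => // /negbT; rewrite -leNgt => H.
  by rewrite !dotvNl ltrN2 lt_neqAle H andbT.
have [t [t0 sub [j' Hj' aj']]] := tilt_attains n0 Hw' Hj.
exists (c + t *: w'); split => //.
  have cw : dot c w' = 0.
    by rewrite /w'; case: ifP => _; [rewrite dotvC wc | rewrite dotvNr dotvC wc oppr0].
  apply/eqP => /(congr1 (fun x => dot x x)).
  rewrite dotv0l !(dotvDl, dotvDr, dotvZl, dotvZr) (dotvC w' c) cw !mulr0 !addr0.
  have : 0 < dot c c.
    rewrite lt_neqAle dotvv_ge0 andbT eq_sym; apply/eqP => /dotvv_eq0 E.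
    by move: c0; rewrite E eqxx.
  have := dotvv_ge0 w'; nra.
exists j'; rewrite aj' /=; apply/negP => ajc.
by move: Hj'; rewrite (Hw' _ ajc) ltxx.
Qed.

Lemma tilt_to_facet c a : c != 0 -> attains c a ->
  exists c', [/\ c' != 0, forall i, attains c i -> attains c' i &
    \rank (face_mx (attains c') a) = d.-1].
Proof.
move=> c0 ac.
move: {2}#|[pred i | ~~ attains c i]| (leqnn #|[pred i | ~~ attains c i]|) => k.
elim: k c c0 ac => [|k IH] c c0 ac Hk.
  exists c; split => //; apply/eqP; rewrite eqn_leq rank_face_mx_leq //=.
  rewrite leqNgt; apply/negP => rk.
  have [c' [_ sub [j /andP [_ nj]]]] := tilt_step c0 ac rk.
  by move: Hk; rewrite leqn0 => /eqP /card0_eq /(_ j); rewrite !inE nj.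
case: (ltnP (\rank (face_mx (attains c) a)) d.-1) => rk; last first.
  by exists c; split => //; apply/eqP; rewrite eqn_leq rank_face_mx_leq.
have [c' [c'0 sub [j /andP [aj nj]]]] := tilt_step c0 ac rk.
have Hk' : (#|[pred i | ~~ attains c' i]| <= k)%N.
  rewrite -ltnS; apply: leq_trans Hk; apply: proper_card; apply/properP; split.
    by apply/fintype.subsetP => i; rewrite !inE; apply: contra => /sub.
  by exists j; rewrite !inE ?nj ?aj.
have [c'' [c''0 sub' rk']] := IH c' c'0 (sub _ ac) Hk'.
by exists c''; split => //; move=> i ai; apply: sub'; apply: sub.
Qed.

End Tilting.

Section SimplexFacets.
Variables (R : realType) (d : nat) (V : seq 'rV[R]_d).
Local Notation vec := 'rV[R]_d.
Local Notation dot := (@dotv R d).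
Local Notation n := (size V).
Local Notation pt i := (V`_(@nat_of_ord (size V) i)).
Local Notation P := (conv V).
Local Notation attains := (@attains R d V).
Local Notation face_mx := (@face_mx R d V).

Lemma is_facet_of_rank c a : attains c a -> \rank (face_mx (attains c) a) = d.-1 ->
  is_facet P (face_dir P c).
Proof.
move=> ac rk.
have fa : face_dir P c (pt a) by apply/face_dir_pt.
split; first by exists c; split => //; exists (pt a).
exists (pt a); split => //.
set S := [set x - pt a | x in face_dir P c].
have HS i : S (row i (face_mx (attains c) a)).
  rewrite face_mx_row; case: ifP => ai.
    by exists (pt i) => //; apply/face_dir_pt.
  by exists (pt a) => //; rewrite subrr.
have [K [KS Krk MK]] := rowsub_rank_cast rk HS.
split; first by exists K.
exists K => x [y fy <-].
have [l [l0 l1 la ->]] := (face_dirE V c y).1 fy.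
apply: (submx_trans _ MK).
have -> : \sum_i l i *: pt i - pt a = \sum_i l i *: row i (face_mx (attains c) a).
  rewrite -[pt a]scale1r -l1 scaler_suml -sumrB; apply: eq_bigr => i _.
  rewrite face_mx_row -scalerBr; case: ifP => ai //.
  by have [->|/la] := eqVneq (l i) 0; [rewrite !scale0r | rewrite ai].
by apply: summx_sub => i _; apply: scalemx_sub; apply: row_sub.
Qed.

Lemma vertex_is_pt v : is_vertex P v -> exists i, pt i = v.
Proof.
case=> c Hc; have n0 : (0 < n)%N.
  have : face_dir P c v by rewrite Hc.
  by case=> /conv_size_gt0.
have [i ai] := attains_exists c n0; exists i.
have : face_dir P c (pt i) by apply/face_dir_pt.
by rewrite Hc.
Qed.

Definition edge_mx (s : seq vec) : 'M[R]_(d.-1, d) := \matrix_(k < d.-1) (s`_k.+1 - s`_0).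

Lemma edge_mx_row s k : row k (edge_mx s) = s`_k.+1 - s`_0.
Proof. by rewrite rowK. Qed.

Lemma edge_mx_orth_const s (u : vec) : size s = d -> edge_mx s *m u^T = 0 ->
  forall v, v \in s -> dot u v = dot u s`_0.
Proof.
move=> sz /mulmx_tr_eq0 H v /(nthP 0) [[|k] ks <-] //.
have kd : (k < d.-1)%N by move: ks; rewrite sz; lia.
have := H (Ordinal kd); rewrite edge_mx_row dotvBr => /eqP; rewrite subr_eq0 => /eqP.
by [].
Qed.

Lemma edge_mx_solve s : size s = d -> row_free (edge_mx s) -> forall f : vec -> R,
  exists u : vec, forall v, v \in s -> dot u v - dot u s`_0 = f v - f s`_0.
Proof.
move=> sz rf f.
have [u Hu] := row_free_solve rf (fun k => f s`_k.+1 - f s`_0).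
exists u => v /(nthP 0) [[|k] ks <-]; first by rewrite !subrr.
have kd : (k < d.-1)%N by move: ks; rewrite sz; lia.
by have := Hu (Ordinal kd); rewrite edge_mx_row dotvBr.
Qed.

Definition simplex_facet c s := [/\ c != 0, size s = d, uniq s,
  (forall v, v \in s <-> is_vertex P v /\ face_dir P c v) & row_free (edge_mx s)].

Lemma simplex_facet_memE c s : simplex_facet c s ->
  forall v, v \in s <-> is_vertex P v /\ face_dir P c v.
Proof. by case. Qed.

Lemma simplex_facet_mem c s v : simplex_facet c s -> v \in s -> is_vertex P v /\ face_dir P c v.
Proof. by move=> /simplex_facet_memE Hs /Hs. Qed.

Lemma simplex_facet_nth01 c s : (2 < d)%N -> simplex_facet c s ->
  [/\ s`_0 \in s, s`_1 \in s & s`_0 != s`_1].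
Proof.
move=> d3; case=> _ sz us _ _; split; try by apply: mem_nth; rewrite sz; lia.
by rewrite nth_uniq // sz; lia.
Qed.

Lemma simplex_facet_orth_parallel c s t : (0 < d)%N -> simplex_facet c s ->
  (forall v, v \in s -> dot t (v - s`_0) = 0) -> exists beta, t = beta *: c.
Proof.
move=> d0 [c0 sz us Hs rf] Ht.
have s_nth (i : 'I_d.-1) : s`_i.+1 \in s by apply: mem_nth; rewrite sz -ltn_predRL.
have s0 : s`_0 \in s by apply: mem_nth; rewrite sz.
have Xt : edge_mx s *m t^T = 0.
  by apply/mulmx_tr_eq0 => i; rewrite edge_mx_row Ht ?s_nth.
have Xc : edge_mx s *m c^T = 0.
  apply/mulmx_tr_eq0 => i; rewrite edge_mx_row dotvBr.
  have [_ f1] := (Hs _).1 (s_nth i); have [_ f0] := (Hs _).1 s0.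
  by rewrite (face_dir_dotv_eq f1 f0) subrr.
exact: orth_corank1_parallel (eqP rf) d0 c0 Xc Xt.
Qed.

Lemma simplex_facet_exists c a : simplicial P -> c != 0 -> attains c a ->
  \rank (face_mx (attains c) a) = d.-1 -> exists s, simplex_facet c s.
Proof.
move=> simp c0 ac rk.
have [s [us [sz Hs]]] := simp _ (is_facet_of_rank ac rk).
exists s; split => //.
rewrite /row_free; apply/eqP/anti_leq; rewrite rank_leq_row /= -{1}rk.
apply: mxrankS; apply: submx_of_orth => u Xu.
have Hv := edge_mx_orth_const sz Xu.
have Hf := @face_dir_dotv_const _ _ V c u (dot u s`_0)
  (fun v vv fv => Hv v ((Hs v).2 (conj vv fv))).
apply/mulmx_tr_eq0 => i; rewrite face_mx_row; case: ifP => ai; last by rewrite dotv0r.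
rewrite dotvBr !Hf ?subrr //; by apply/face_dir_pt.
Qed.

End SimplexFacets.

Section AdjacentFacets.
Variables (R : realType) (d : nat) (V : seq 'rV[R]_d).
Local Notation vec := 'rV[R]_d.
Local Notation dot := (@dotv R d).
Local Notation n := (size V).
Local Notation pt i := (V`_(@nat_of_ord (size V) i)).
Local Notation P := (conv V).
Local Notation attains := (@attains R d V).
Local Notation simplex_facet := (@simplex_facet R d V).

Lemma facet_edge_face c s p q : simplex_facet c s -> p \in s -> q \in s -> p != q ->
  exists ce, [/\ face_dir P ce `<=` face_dir P c, face_dir P ce p, face_dir P ce q,
    (forall v, is_vertex P v -> face_dir P ce v -> v = p \/ v = q) &
    (forall w, dot w p = dot w q -> forall x, face_dir P ce x -> dot w x = dot w p)].
Proof.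
case=> c0 sz us Hs rf ps qs pq.
(* [u] is (up to a constant) 0 at p, q and -1 at the other vertices of the facet,
   so a small tilt of c along u exposes exactly the edge [p, q]. *)
pose f (v : vec) : R := if v \in [:: p; q] then 0 else -1.
have [u Hu] := edge_mx_solve sz rf f.
set C := dot u s`_0 - f s`_0.
have Hus v : v \in s -> dot u v = f v + C by move=> vs; have := Hu v vs; rewrite /C; lra.
have fle v : f v <= 0 by rewrite /f; case: ifP => _; lra.
have fp : face_dir P c p by case: ((Hs p).1 ps).
have fq : face_dir P c q by case: ((Hs q).1 qs).
have n0 : (0 < n)%N by case: fp => /conv_size_gt0.
have [e e0 He] := face_dir_perturb V c u.
set ce := c + e *: u.
have Hce := He e e0 (lexx e); rewrite -/ce in Hce.
have bnd x : face_dir P c x -> dot u x <= C.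
  move=> fx; have [z [vz fz]] := face_dir_vertex ce n0.
  rewrite Hce in fz; case: fz => fz Hz.
  apply: (le_trans (Hz x fx)); rewrite Hus; last by apply/Hs.
  by have := fle z; lra.
have up : dot u p = C by rewrite Hus // /f mem_head; lra.
have uq : dot u q = C by rewrite Hus // /f !inE eqxx orbT; lra.
have vpq v : is_vertex P v -> face_dir P ce v -> v = p \/ v = q.
  move=> vv; rewrite Hce => -[fv Hv].
  have vs : v \in s by apply/Hs.
  have := Hv p fp; rewrite up (Hus v vs) /f.
  case: ifP => [|_]; last by rewrite lerDr leNgt ltrN10.
  by rewrite !inE => /orP [/eqP ->|/eqP ->] _; [left|right].
exists ce; split => //.
- by rewrite Hce => x [].
- by rewrite Hce; split => // y /bnd; rewrite up.
- by rewrite Hce; split => // y /bnd; rewrite uq.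
- move=> w wpq; apply: face_dir_dotv_const => v vv fv.
  by case: (vpq v vv fv) => ->.
Qed.

Hypothesis FD : fulldim V.
Hypothesis simp : simplicial P.

Lemma facet_containing_face c a : c != 0 -> attains c a ->
  exists c' s, simplex_facet c' s /\ face_dir P c `<=` face_dir P c'.
Proof.
move=> c0 ac; have [c' [c'0 sub rk]] := tilt_to_facet FD c0 ac.
have [s fd] := simplex_facet_exists simp c'0 (sub _ ac) rk.
by exists c', s; split => //; exact: face_dir_subset.
Qed.

Lemma vertex_in_facet v : (0 < d)%N -> is_vertex P v -> exists c s, simplex_facet c s /\ v \in s.
Proof.
move=> d0 vv; have [cv Hcv] := vv; have [iv Eiv] := vertex_is_pt vv.
have aiv : attains cv iv by apply/face_dir_pt; rewrite Eiv Hcv.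
have [c [s [fd sub]]] := facet_containing_face (fulldim_expose_neq0 FD d0 Hcv) aiv.
exists c, s; split => //; apply/(simplex_facet_memE fd); split => //.
by apply: sub; rewrite Hcv.
Qed.

Lemma tilt_edge_face c s p q ce : (2 < d)%N -> simplex_facet c s -> p \in s ->
  face_dir P ce `<=` face_dir P c ->
  (forall v, is_vertex P v -> face_dir P ce v -> v = p \/ v = q) ->
  exists c', [/\ c' != 0, forall i, attains ce i -> attains c' i &
    exists2 j, dot c (pt j) < dot c p & attains c' j].
Proof.
move=> d3 fd ps sub vpq; have [c0 sz us Hs _] := fd.
have [vp fp] := (Hs p).1 ps; have [ip Eip] := vertex_is_pt vp.
have n0 : (0 < n)%N by apply: leq_ltn_trans (ltn_ord ip).
have hyp1 i : attains ce i -> dot (- c) (pt i) = - dot c p.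
  move=> ai; rewrite dotvNl; congr (- _).
  by apply: face_dir_dotv_eq (sub _ ((face_dir_pt _ _).2 ai)) fp.
have hyp2 : exists j, - dot c p < dot (- c) (pt j).
  have [j Hj] := fulldim_dotv_neq FD ip c0.
  exists j; rewrite dotvNl ltrN2 lt_neqAle -Eip Hj /=.
  by rewrite Eip; apply: face_dir_max fp _; exact: conv_pt.
have [t [t0 sub' [j Hj aj]]] := tilt_attains n0 hyp1 hyp2.
have jlt : dot c (pt j) < dot c p by move: Hj; rewrite dotvNl ltrN2.
exists (ce + t *: - c); split => //; last by exists j.
(* Otherwise ce would be a multiple of c, exposing the whole facet. *)
apply/eqP => E.
have Ece : ce = t *: c by apply/eqP; rewrite -subr_eq0 -scalerN E.
have [r rs /andP [rp rq]] : exists2 r, r \in s & (r != p) && (r != q).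
  by apply: third_elem us; rewrite sz.
have [vr fr] := (Hs r).1 rs.
have : face_dir P ce r by rewrite Ece; apply: face_dir_scale.
by move/(vpq r vr) => [/eqP|/eqP]; rewrite ?(negbTE rp) ?(negbTE rq).
Qed.

Lemma adjacent_facet c s p q : (2 < d)%N -> simplex_facet c s ->
  p \in s -> q \in s -> p != q ->
  exists c' s', [/\ simplex_facet c' s', p \in s', q \in s' &
    exists2 z, z \in s' & dot c z < dot c p].
Proof.
move=> d3 fd ps qs pq.
have [ce [sub fpe fqe vpq _]] := facet_edge_face fd ps qs pq.
have [c' [c'0 sub' [j jlt aj]]] := tilt_edge_face d3 fd ps sub vpq.
have [vp fp] := simplex_facet_mem fd ps; have [vq _] := simplex_facet_mem fd qs.
have [ip Eip] := vertex_is_pt vp.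
have aip : attains ce ip by apply/face_dir_pt; rewrite Eip.
have [c'' [s' [fd' sub'']]] := facet_containing_face c'0 (sub' _ aip).
have fe_sub x : face_dir P ce x -> face_dir P c'' x.
  by move=> /(face_dir_subset sub') /sub''.
have fj : face_dir P c'' (pt j) by apply/sub''/face_dir_pt.
have [z [vz fz nz]] := face_dir_vertex_neq fj (negbT (lt_eqF jlt)).
exists c'', s'; split => //.
- by apply/(simplex_facet_memE fd'); split => //; exact: fe_sub fpe.
- by apply/(simplex_facet_memE fd'); split => //; exact: fe_sub fqe.
exists z; first by apply/(simplex_facet_memE fd').
by rewrite lt_neqAle nz; apply: face_dir_max fp (face_dir_sub fz).
Qed.

End AdjacentFacets.

Section FacetHomothety.
Variables (R : realType) (d : nat) (V W : seq 'rV[R]_d).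
Local Notation P := (conv V).
Local Notation Q := (conv W).
Local Notation simplex_facet := (@simplex_facet R d V).
Local Notation phi := (vertex_map V W).
Hypothesis hF : normal_fan P = normal_fan Q.
Hypothesis Vn : (0 < size V)%N.
Hypothesis Wn : (0 < size W)%N.

Lemma facet_edge_parallel c s p q : simplex_facet c s -> p \in s -> q \in s -> p != q ->
  exists2 mu, 0 < mu & phi q - phi p = mu *: (q - p).
Proof.
move=> fd ps qs pq.
have [ce [_ fp fq _ Hw]] := facet_edge_face fd ps qs pq.
have [vp _] := simplex_facet_mem fd ps; have [vq _] := simplex_facet_mem fd qs.
exact: (vertex_map_edge hF Vn Wn vp vq pq fp fq Hw).
Qed.

Lemma facet_vertex_map_homothety c s : (2 < d)%N -> simplex_facet c s ->
  exists2 mu, 0 < mu & forall v, v \in s -> phi v = phi s`_0 + mu *: (v - s`_0).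
Proof.
move=> d3 fd; have [s0s s1s s01] := simplex_facet_nth01 d3 fd.
have [mu mu0 Hmu] := facet_edge_parallel fd s0s s1s s01.
exists mu => // v vs.
have [->|v0] := eqVneq v s`_0; first by rewrite subrr scaler0 addr0.
have s0v : s`_0 != v by rewrite eq_sym.
have [m0 _ Hm0] := facet_edge_parallel fd s0s vs s0v.
suff -> : mu = m0 by rewrite -Hm0 addrC subrK.
have [v1|v1] := eqVneq v s`_1.
  by move: Hm0; rewrite v1 Hmu; apply: scalerIr; rewrite subr_eq0 eq_sym.
have s1v : s`_1 != v by rewrite eq_sym.
have [m1 _ Hm1] := facet_edge_parallel fd s1s vs s1v.
have [c0 sz us Hs rf] := fd.
have [u Hu] := edge_mx_solve sz rf (fun x => if x == s`_1 then 1 else 0).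
apply: (@triangle_scale_eq _ _ u s`_0 s`_1 v _ _ m1) => //.
- by rewrite dotvBr Hu // eqxx (negbTE s01) subr0.
- by rewrite dotvBr Hu // (negbTE v1) (negbTE s01) subrr.
- by rewrite -Hmu -Hm1 -Hm0 addrC subrKA.
Qed.

End FacetHomothety.

Section FacetScaling.
Variables (R : realType) (d : nat) (V W0 W : seq 'rV[R]_d).
Local Notation vec := 'rV[R]_d.
Local Notation dot := (@dotv R d).
Local Notation P := (conv V).
Local Notation Q0 := (conv W0).
Local Notation Q := (conv W).
Local Notation simplex_facet := (@simplex_facet R d V).
Local Notation phi0 := (vertex_map V W0).
Local Notation phi := (vertex_map V W).
Hypothesis hF0 : normal_fan P = normal_fan Q0.
Hypothesis hF : normal_fan P = normal_fan Q.
Hypothesis Vn : (0 < size V)%N.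
Hypothesis W0n : (0 < size W0)%N.
Hypothesis Wn : (0 < size W)%N.
Hypothesis d3 : (2 < d)%N.
Variables r0 r : R.
Hypothesis ins0 : forall v, is_vertex Q0 v -> dot v v = r0.
Hypothesis ins : forall v, is_vertex Q v -> dot v v = r.

(* |k phi0 v + t|^2 = r and |phi0 v|^2 = r0 on the facet force t to be
   orthogonal to the differences phi0 v - phi0 s_0 = m0 (v - s_0). *)
Lemma facet_vertex_map_affine c s : simplex_facet c s -> exists2 k, 0 < k & exists t : vec,
  (forall v, v \in s -> phi v = k *: phi0 v + t) /\
  (forall v, v \in s -> dot t (v - s`_0) = 0).
Proof.
move=> fd; have [s0s _ _] := simplex_facet_nth01 d3 fd.
have [mu mu0 Hmu] := facet_vertex_map_homothety hF Vn Wn d3 fd.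
have [m0 m00 Hm0] := facet_vertex_map_homothety hF0 Vn W0n d3 fd.
set k := mu / m0.
have k0 : 0 < k by rewrite divr_gt0.
have km : k * m0 = mu by rewrite /k divfK // gt_eqF.
set t := phi s`_0 - k *: phi0 s`_0.
have Ht v : v \in s -> phi v = k *: phi0 v + t.
  move=> vs; rewrite Hmu // Hm0 // /t [k *: (_ + _)]scalerDr scalerA km.
  by rewrite addrAC [k *: phi0 _ + _]addrC subrK.
exists k => //; exists t; split => // v vs.
have [vv _] := simplex_facet_mem fd vs; have [vs0 _] := simplex_facet_mem fd s0s.
have e1 := ins (vertex_map_vertex hF Wn vv); have e2 := ins (vertex_map_vertex hF Wn vs0).
have f1 := ins0 (vertex_map_vertex hF0 W0n vv); have f2 := ins0 (vertex_map_vertex hF0 W0n vs0).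
rewrite Ht // dotvv_affine f1 in e1; rewrite Ht // dotvv_affine f2 in e2.
have : 2 * k * dot (phi0 v - phi0 s`_0) t = 0 by rewrite dotvBl; lra.
move=> /eqP; rewrite mulf_eq0 mulf_eq0 pnatr_eq0 /= gt_eqF //= => /eqP.
rewrite Hm0 // Hm0 // subrr scaler0 addr0 addrC addKr dotvZl => /eqP.
by rewrite mulf_eq0 gt_eqF //= dotvC => /eqP.
Qed.

Lemma affine_coeffs_unique k t k' t' p q : is_vertex P p -> is_vertex P q -> p != q ->
  phi p = k *: phi0 p + t -> phi q = k *: phi0 q + t ->
  phi p = k' *: phi0 p + t' -> phi q = k' *: phi0 q + t' -> k = k' /\ t = t'.
Proof.
move=> vp vq pq ep eq ep' eq'.
have npq : phi0 p - phi0 q != 0.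
  by rewrite subr_eq0; apply: contra pq => /eqP /(vertex_map_inj hF0 Vn W0n vp vq) ->.
have kk : k = k'.
  apply: (scalerIr npq); rewrite !scalerBr.
  have -> : k *: phi0 p = phi p - t by rewrite ep addrK.
  have -> : k *: phi0 q = phi q - t by rewrite eq addrK.
  have -> : k' *: phi0 p = phi p - t' by rewrite ep' addrK.
  have -> : k' *: phi0 q = phi q - t' by rewrite eq' addrK.
  by rewrite !opprB !addrA !subrK.
by split => //; move: ep'; rewrite -kk ep => /addrI.
Qed.

Hypothesis FD : fulldim V.
Hypothesis simp : simplicial P.

(* [t] is normal to the facet s; the adjacent facet through [s_0, s_1] shares k
   and t, and has a vertex z strictly below the hyperplane of s, so t = 0. *)
Lemma facet_vertex_map_scale c s : simplex_facet c s -> exists2 k, 0 < k &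
  forall v, v \in s -> phi v = k *: phi0 v.
Proof.
move=> fd; have [k k0 [t [Ht Ht0]]] := facet_vertex_map_affine fd.
exists k => //.
have [s0s s1s s01] := simplex_facet_nth01 d3 fd.
have [c' [s' [fd' ps' qs' [z zs' zlt]]]] := adjacent_facet FD simp d3 fd s0s s1s s01.
have [k' _ [t' [Ht' Ht0']]] := facet_vertex_map_affine fd'.
have [vp _] := simplex_facet_mem fd s0s; have [vq _] := simplex_facet_mem fd s1s.
have [_ E] := affine_coeffs_unique vp vq s01 (Ht _ s0s) (Ht _ s1s) (Ht' _ ps') (Ht' _ qs').
rewrite -E in Ht0'.
have tz : dot t (z - s`_0) = 0.
  have -> : z - s`_0 = (z - s'`_0) - (s`_0 - s'`_0) by rewrite opprB addrA subrK.
  by rewrite dotvBr !Ht0' // subrr.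
have [beta Eb] := simplex_facet_orth_parallel (leq_trans (isT : (0 < 3)%N) d3) fd Ht0.
move: tz; rewrite Eb dotvZl dotvBr => /eqP; rewrite mulf_eq0 subr_eq0 (lt_eqF zlt) orbF.
by move=> /eqP b0 v vs; rewrite Ht // Eb b0 scale0r addr0.
Qed.

End FacetScaling.

Lemma normal_fan_size_gt0 (R : realType) (d : nat) (V W : seq 'rV[R]_d) :
  (0 < size V)%N -> normal_fan (conv V) = normal_fan (conv W) -> (0 < size W)%N.
Proof.
move=> Vn hF.
have : normal_fan (conv V) (normal_cone (conv V) (face_dir (conv V) 0)).
  exists (face_dir (conv V) 0); split => //; exists 0; split => //.
  exact: face_dir_neq0.
rewrite hF => -[G [[c [-> [x [Px _]]]] _]].
exact: conv_size_gt0 Px.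
Qed.

Section GlobalScaling.
Variables (R : realType) (d : nat) (V W0 W : seq 'rV[R]_d).
Local Notation dot := (@dotv R d).
Local Notation P := (conv V).
Local Notation Q0 := (conv W0).
Local Notation Q := (conv W).
Local Notation simplex_facet := (@simplex_facet R d V).
Local Notation phi0 := (vertex_map V W0).
Local Notation phi := (vertex_map V W).
Hypothesis hF0 : normal_fan P = normal_fan Q0.
Hypothesis hF : normal_fan P = normal_fan Q.
Hypothesis Vn : (0 < size V)%N.
Hypothesis W0n : (0 < size W0)%N.
Hypothesis Wn : (0 < size W)%N.
Hypothesis d3 : (2 < d)%N.
Hypothesis FD : fulldim V.
Hypothesis simp : simplicial P.
Variables r0 r : R.
Hypothesis ins0 : forall v, is_vertex Q0 v -> dot v v = r0.
Hypothesis ins : forall v, is_vertex Q v -> dot v v = r.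

(* The facet-wise ratios k all satisfy r = k^2 r0, hence coincide. *)
Lemma vertex_map_scale : exists2 k, 0 < k & forall v, is_vertex P v -> phi v = k *: phi0 v.
Proof.
have d0 : (0 < d)%N by apply: leq_trans d3.
have facet_scale := facet_vertex_map_scale hF0 hF Vn W0n Wn d3 ins0 ins FD simp.
have [v0 [vv0 _]] := face_dir_vertex 0 Vn.
have [c0 [s0 [fd0 _]]] := vertex_in_facet FD simp d0 vv0.
have [k0 k00 Hk0] := facet_scale _ _ fd0.
have [ps qs pq] := simplex_facet_nth01 d3 fd0.
have [vp _] := simplex_facet_mem fd0 ps; have [vq _] := simplex_facet_mem fd0 qs.
have r0_neq0 : r0 != 0.
  apply: (sphere_radius_neq0 _ (ins0 (vertex_map_vertex hF0 W0n vp))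
    (ins0 (vertex_map_vertex hF0 W0n vq))).
  by apply: contra pq => /eqP /(vertex_map_inj hF0 Vn W0n vp vq) ->.
have sqE k c s : simplex_facet c s -> (forall v, v \in s -> phi v = k *: phi0 v) -> r = k ^+ 2 * r0.
  move=> fd H; have [ps' _ _] := simplex_facet_nth01 d3 fd.
  have [vp' _] := simplex_facet_mem fd ps'.
  rewrite -(ins (vertex_map_vertex hF Wn vp')) -(ins0 (vertex_map_vertex hF0 W0n vp')) H //.
  by rewrite dotvZl dotvZr mulrA expr2.
exists k0 => // v vv.
have [c [s [fd vs]]] := vertex_in_facet FD simp d0 vv.
have [k k0' Hk] := facet_scale _ _ fd.
have kk : k = k0.
  apply/eqP; rewrite -(@eqrXn2 _ 2) ?ltW //; apply/eqP.
  by apply: (mulIf r0_neq0); rewrite -(sqE _ _ _ fd0 Hk0) -(sqE _ _ _ fd Hk).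
by rewrite Hk // kk.
Qed.

Lemma support_scale : exists2 k, 0 < k & forall u, Defs.support Q u = k * Defs.support Q0 u.
Proof.
have [k k0 Hk] := vertex_map_scale.
exists k => // u.
have [w [vw fw]] := face_dir_vertex u Wn; have [w0 [vw0 fw0]] := face_dir_vertex u W0n.
have [v [vv Ev]] := vertex_map_surj hF Vn Wn vw.
have [v' [vv' Ev']] := vertex_map_surj hF0 Vn W0n vw0.
rewrite (support_face_dir fw) (support_face_dir fw0).
apply/eqP; rewrite eq_le; apply/andP; split.
  rewrite -Ev Hk // dotvZr ler_pM2l //.
  by apply: face_dir_max fw0 _; apply: vertex_mem; apply: vertex_map_vertex.
rewrite -Ev' -dotvZr -Hk //.
by apply: face_dir_max fw _; apply: vertex_mem; apply: vertex_map_vertex.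
Qed.

End GlobalScaling.

Local Close Scope ring_scope.
Local Close Scope classical_set_scope.
Unset Implicit Arguments.

Theorem corollary4p9 (R : realType) (d : nat) (P : set 'rV[R]_d) :
  (3 <= d)%N -> is_polytope P -> aff_dim_eq P d -> simplicial P ->
  InCone_dim_le P 1.
Proof.
move=> d3 [V ->] aff simp.
have Vn : (0 < size V)%N by case: aff => x0 [Px0 _]; exact: conv_size_gt0 Px0.
have FD := fulldim_of_aff aff.
case: (pselect (exists Q0, InCone (conv V) Q0)) => [[Q0 [[W0 ->] [hF0 [r0 ins0]]]]|N]; last first.
  by exists (fun _ _ => 0%R) => f [Q HQ _]; exfalso; apply: N; exists Q.
exists (fun _ => Defs.support (conv W0)) => f [Q [[W ->] [hF [r ins]]] <-].
have W0n := normal_fan_size_gt0 Vn (esym hF0).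
have Wn := normal_fan_size_gt0 Vn (esym hF).
have [k _ Hk] := support_scale (esym hF0) (esym hF) Vn W0n Wn d3 FD simp ins0 ins.
by exists (fun _ => k); apply: funext => u; rewrite big_ord1 Hk.
Qed.
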